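(* Let $f(x)=\max_{a\in A}(c_a+a\cdot x)$ be a homogeneous tropical signomial on $\mathbb{R}^n$, and let $H=\{x\in\mathbb{R}^n:\sum_j x_j=0\}$. Then $f$ attains a minimum over $H$ if and only if some cell $\sigma$ of the regular subdivision $\Delta(f)$ contains a point of the form $\lambda\mathbf{1}_n$, $\lambda\in\mathbb{R}$, in its relative interior (the central cell); in that case the set of minimizers of $f$ over $H$ is exactly the cell of $\overline{\mathrm{NC}}(f)$ dual to $\sigma$.
   Context: A tropical signomial is $f(x)=\max_{a\in A}(c_a+a\cdot x)$ with $A\subset\mathbb{R}^n_{\ge 0}$ finite and $c_a\in\mathbb{R}\cup\{-\infty\}$; its support is $\mathrm{supp}(f)=\{a\in A: c_a\neq-\infty\}$, assumed nonempty, with distinct exponents. $f$ is homogeneous if $\sum_j a_j$ is the same for all $a\in \mathrm{supp}(f)$. For $x\in\mathbb{R}^n$ let $B(x)=\{a\in\mathrm{supp}(f): c_a+a\cdot x=f(x)\}$. The regular subdivision $\Delta(f)$ (induced by lifting $a$ to $(a,c_a)$ and taking upper faces) has as cells the polytopes $\mathrm{conv}(B(x))$, $x\in\mathbb{R}^n$; a cell $\sigma=\mathrm{conv}(B(x))$ determines the set $B(x)$. The normal complex $\mathrm{NC}(f)$ consists of the polyhedra $D(\sigma)=\{y\in\mathbb{R}^n: B(x)\subseteq B(y)\}$ for cells $\sigma=\mathrm{conv}(B(x))$ (the regions where $f$ is linear and their faces); $D(\sigma)$ is the cell dual to $\sigma$. $\overline{\mathrm{NC}}(f)$ is the complex $\{D(\sigma)\cap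 H\}$, and the cell of $\overline{\mathrm{NC}}(f)$ dual to $\sigma$ is $D(\sigma)\cap H$. *)

From HB Require Import structures.
From mathcomp Require Import all_boot all_order all_algebra.
From mathcomp Require Import reals.
Set Implicit Arguments. Unset Strict Implicit. Unset Printing Implicit Defensive.
Import Order.TTheory GRing.Theory Num.Theory.
Local Open Scope ring_scope.

Section TropSig.
Variables (R : realType) (n : nat).
Implicit Types (a x y p q : 'rV[R]_n).

Definition dotv a x : R := \sum_(j < n) a ord0 j * x ord0 j.

(* A tropical signomial is given by a finite list A of exponents together
   with coefficients c : R^n -> R ∪ {-oo}, encoded as option R
   (None = -oo). *)
Variables (A : seq 'rV[R]_n) (c : 'rV[R]_n -> option R).

Definition supp : seq 'rV[R]_n := [seq a <- A | c a != None].

Definition coef a : R := odflt 0 (c a).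

Definition term a x : R := coef a + dotv a x.

(* f(x) = max_{a in supp} (c_a + a.x); the default value is the term of the
   first element of the support (the support is assumed nonempty). *)
Definition tsig x : R :=
  \big[Num.max/term (head 0 supp) x]_(a <- supp) term a x.

Definition homogeneous : Prop :=
  exists d : R, forall a, a \in supp -> \sum_(j < n) a ord0 j = d.

Definition Bset x : seq 'rV[R]_n := [seq a <- supp | term a x == tsig x].

End TropSig.

Section Convex.
Variables (R : realType) (n : nat).

Definition in_conv (S : seq 'rV[R]_n) (p : 'rV[R]_n) : Prop :=
  exists w : 'rV[R]_n -> R,
    [/\ forall a, a \in S -> 0 <= w a,
        \sum_(a <- S) w a = 1 &
        p = \sum_(a <- S) w a *: a].

Definition in_aff (S : seq 'rV[R]_n) (p : 'rV[R]_n) : Prop :=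
  exists w : 'rV[R]_n -> R,
    \sum_(a <- S) w a = 1 /\ p = \sum_(a <- S) w a *: a.

Definition in_relint_conv (S : seq 'rV[R]_n) (p : 'rV[R]_n) : Prop :=
  in_conv S p /\
  exists e : R, 0 < e /\
    forall q, in_aff S q -> (forall j, `|q ord0 j - p ord0 j| < e) ->
      in_conv S q.

Definition inH (x : 'rV[R]_n) : Prop := \sum_(j < n) x ord0 j = 0.

End Convex.

(* If w > 0 are weights on a cell B(x) with sum_a w_a a = lam 1, then
   for every z in H the average sum_a w_a (c_a + a.z) equals sum_a w_a c_a, and it is
   at most f(z), with equality iff B(x) is contained in B(z).  Hence f is minimal on
   H exactly on the dual cell.  Conversely, at a minimizer y, Farkas' lemma shows
   that each a in B(y) either carries positive weight in a nonnegative combination of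
   B(y) balanced at the diagonal point (d/n) 1 (d the degree of f), or gives a
   direction in H along which y stays a minimizer while a leaves B(y).  A minimizer
   with |B(y)| minimal therefore writes (d/n) 1 with positive weights on all of
   B(y), i.e. in the relative interior of its cell. *)

From HB Require Import structures.
From mathcomp Require Import all_boot all_order all_algebra.
From mathcomp Require Import reals.
From mathcomp Require Import ring lra.
Import Order.TTheory GRing.Theory Num.Theory.
Local Open Scope ring_scope.
Set Implicit Arguments. Unset Strict Implicit. Unset Printing Implicit Defensive.

Section DotProduct.
Variables (R : realType) (n : nat).
Implicit Types (a x y : 'rV[R]_n) (t : R).

Lemma dotvC a x : dotv a x = dotv x a.
Proof. by apply: eq_bigr => j _; rewrite mulrC. Qed.

Lemma dotvDr a x y : dotv a (x + y) = dotv a x + dotv a y.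
Proof. by rewrite /dotv -big_split; apply: eq_bigr => j _; rewrite mxE mulrDr. Qed.

Lemma dotvZr a x t : dotv a (t *: x) = t * dotv a x.
Proof. by rewrite /dotv mulr_sumr; apply: eq_bigr => j _; rewrite mxE mulrCA. Qed.

Lemma dotvBr a x y : dotv a (x - y) = dotv a x - dotv a y.
Proof. by rewrite dotvDr -scaleN1r dotvZr mulN1r. Qed.

Lemma dotvDl a x y : dotv (x + y) a = dotv x a + dotv y a.
Proof. by rewrite !(dotvC _ a) dotvDr. Qed.

Lemma dotvBl a x y : dotv (x - y) a = dotv x a - dotv y a.
Proof. by rewrite !(dotvC _ a) dotvBr. Qed.

Lemma dotvZl a x t : dotv (t *: x) a = t * dotv x a.
Proof. by rewrite !(dotvC _ a) dotvZr. Qed.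

Lemma dotv_suml (T : Type) (s : seq T) (F : T -> 'rV[R]_n) x :
  dotv (\sum_(i <- s) F i) x = \sum_(i <- s) dotv (F i) x.
Proof.
elim: s => [|i s IH]; last by rewrite !big_cons dotvDl IH.
by rewrite !big_nil /dotv big1 // => j _; rewrite mxE mul0r.
Qed.

Lemma dotv_const a t : dotv a (const_mx t) = t * \sum_(j < n) a 0 j.
Proof. by rewrite /dotv mulr_sumr; apply: eq_bigr => j _; rewrite mxE mulrC. Qed.

Lemma dotv_gt0 a : a != 0 -> 0 < dotv a a.
Proof.
move=> a0; rewrite lt0r sumr_ge0 ?andbT => [|j _]; last exact: (sqr_ge0 _).
apply: contra a0 => /eqP/psumr_eq0P sq0; apply/eqP/rowP => j.
have /eqP := sq0 (fun i _ => sqr_ge0 (a 0 i)) j isT.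
by rewrite mulf_eq0 orbb mxE => /eqP.
Qed.

End DotProduct.

Section WeightedAverage.
Variables (R : realType) (T : eqType).

Lemma seq_min_gt0 (s : seq T) (F : T -> R) : (forall x, x \in s -> 0 < F x) ->
  exists2 e, 0 < e & forall x, x \in s -> e <= F x.
Proof.
move=> F_gt0; exists (\big[Num.min/1]_(x <- s) F x); last first.
  by move=> x xs; exact: ge_bigmin_seq.
by rewrite big_seq; elim/big_ind: _ => // u v u0 v0; rewrite lt_min u0.
Qed.

Lemma wavg_ge_max (s : seq T) (w F : T -> R) m :
  (forall x, x \in s -> 0 < w x) -> \sum_(x <- s) w x = 1 ->
  (forall x, x \in s -> F x <= m) -> m <= \sum_(x <- s) w x * F x ->
  forall x, x \in s -> F x = m.
Proof.
move=> w_gt0 w1 Fm mF.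
have gap_ge0 x : x \in s -> 0 <= w x * (m - F x).
  by move=> xs; rewrite mulr_ge0 ?subr_ge0 ?Fm ?ltW ?w_gt0.
have gap0 : \sum_(x <- s | x \in s) w x * (m - F x) == 0.
  rewrite eq_le sumr_ge0 ?andbT -?big_seq; last exact: gap_ge0.
  rewrite (eq_bigr (fun x => w x * m - w x * F x)) => [|x _]; last by rewrite mulrBr.
  by rewrite sumrB -mulr_suml w1 mul1r subr_le0.
move=> x xs; move: gap0; rewrite psumr_eq0 // => /allP/(_ x xs).
by rewrite xs mulf_eq0 gt_eqF ?w_gt0 //= subr_eq0 => /eqP.
Qed.

End WeightedAverage.

Section Farkas.
Variables (R : realType) (n : nat) (T : eqType).

Lemma farkas (s : seq T) (h : T -> 'rV[R]_n) (b : 'rV[R]_n) : uniq s ->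
  (exists2 mu : T -> R, forall i, 0 <= mu i & b = \sum_(i <- s) mu i *: h i) \/
  (exists2 v, forall i, i \in s -> dotv (h i) v <= 0 & 0 < dotv b v).
Proof.
elim: s h b => [|i0 s IH] h b /=.
  move=> _; have [->|b0] := eqVneq b 0.
    by left; exists (fun=> 0); rewrite ?big_nil.
  by right; exists b => //; exact: dotv_gt0.
case/andP=> i0s us.
pose ext (mu : T -> R) t i := if i == i0 then t else mu i.
have ext_ge0 mu t : 0 <= t -> (forall i, 0 <= mu i) -> forall i, 0 <= ext mu t i.
  by move=> t0 mu0 i; rewrite /ext; case: ifP.
have sum_ext mu t :
    \sum_(i <- i0 :: s) ext mu t i *: h i = t *: h i0 + \sum_(i <- s) mu i *: h i.
  rewrite big_cons /ext eqxx; congr (_ + _); apply: eq_big_seq => i si.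
  by rewrite ifN //; apply: contraNneq i0s => <-.
have [[mu mu0 ->]|[v vs bv]] := IH h b us.
  by left; exists (ext mu 0); [exact: ext_ge0 | rewrite sum_ext scale0r add0r].
have [i0v|i0v] := leP (dotv (h i0) v) 0.
  by right; exists v => // i; rewrite inE => /predU1P[->|/vs].
(* Fourier-Motzkin step: project along [h i0] onto the hyperplane orthogonal to [v]. *)
pose k y := dotv y v / dotv (h i0) v.
have [[mu mu0 bE]|[u us' bu]] := IH (fun i => h i - k (h i) *: h i0) (b - k b *: h i0) us.
  left; exists (ext mu (k b - \sum_(i <- s) mu i * k (h i))).
    have sum_le0 : \sum_(i <- s) mu i * k (h i) <= 0.
      rewrite big_seq; apply: sumr_le0 => i si.
      by rewrite mulr_ge0_le0 ?mu0 // /k pmulr_lle0 ?invr_gt0 ?vs.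
    by apply: ext_ge0 => //; rewrite subr_ge0 (le_trans sum_le0) // ltW ?divr_gt0.
  rewrite sum_ext -[X in X = _](subrK (k b *: h i0)) bE.
  have -> : \sum_(i <- s) mu i *: (h i - k (h i) *: h i0) =
      \sum_(i <- s) mu i *: h i - (\sum_(i <- s) mu i * k (h i)) *: h i0.
    by rewrite scaler_suml -sumrB; apply: eq_bigr => i _; rewrite scalerBr scalerA.
  by apply/rowP => j; rewrite !mxE; ring.
have swap x y : x / dotv (h i0) v * y = y / dotv (h i0) v * x.
  by rewrite mulrAC [RHS]mulrAC [x * y]mulrC.
right; exists (u - (dotv (h i0) u / dotv (h i0) v) *: v) => [i|].
  rewrite inE dotvBr dotvZr => /predU1P[->|si]; first by rewrite mulfVK ?subrr ?gt_eqF.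
  by move: (us' i si); rewrite dotvBl dotvZl /k swap.
by move: bu; rewrite dotvBl dotvZl dotvBr dotvZr /k swap.
Qed.

End Farkas.

Lemma mulmx_row_norm_le (R : realType) (k m : nat) (P : 'M[R]_(k, m))
    (r : 'rV[R]_k) e :
  0 <= e -> (forall j, `|r 0 j| <= e) ->
  forall i, `|(r *m P) 0 i| <= e * \sum_(j < k) \sum_(l < m) `|P j l|.
Proof.
move=> e0 r_le i; rewrite mxE mulr_sumr (le_trans (ler_norm_sum _ _ _)) //.
apply: ler_sum => j _; rewrite normrM ler_pM ?r_le //.
by rewrite (bigD1 i) //= lerDl sumr_ge0.
Qed.

Section RelativeInterior.
Variables (R : realType) (n : nat).
Implicit Types (S : seq 'rV[R]_n) (p q : 'rV[R]_n) (w : 'rV[R]_n -> R).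

Definition conv_weights S p w :=
  [/\ forall a, a \in S -> 0 <= w a, \sum_(a <- S) w a = 1 & p = \sum_(a <- S) w a *: a].

Lemma sumr_const_seq (T : Type) (s : seq T) (t : R) :
  \sum_(i <- s) t = (size s)%:R * t.
Proof.
elim: s => [|i s IH]; first by rewrite big_nil mul0r.
by rewrite big_cons IH /= -natr1 mulrDl mul1r addrC.
Qed.

(* Push [p] slightly away from the barycenter [b] of [S]; the pushed point is still
   in conv S, and [p] lies strictly between it and [b]. *)
Lemma relint_pos_weights S p : in_relint_conv S p ->
  exists2 w, conv_weights S p w & forall a, a \in S -> 0 < w a.
Proof.
move=> [[w0 [w0_ge0 w01 pE]] [e [e_gt0 near_conv]]].
pose N : R := (size S)%:R.
have N_gt0 : 0 < N.
  rewrite ltr0n lt0n size_eq0; apply/eqP => S0.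
  by move: w01; rewrite S0 big_nil => /eqP; rewrite eq_sym oner_eq0.
pose b := N^-1 *: \sum_(a <- S) a.
pose M := \sum_(j < n) `|p 0 j - b 0 j|.
have M_ge0 : 0 <= M by apply: sumr_ge0.
pose eps := e / (M + 1).
have eps_gt0 : 0 < eps by rewrite divr_gt0 ?ltr_pwDr.
pose q := p + eps *: (p - b).
have [u [u_ge0 u1 qE]] : in_conv S q.
  apply: near_conv => [|j].
    exists (fun a => (1 + eps) * w0 a - eps / N); split.
      rewrite sumrB -mulr_sumr w01 sumr_const_seq.
      by rewrite mulrCA divff ?gt_eqF // !mulr1 addrK.
    rewrite (eq_bigr (fun a => (1 + eps) *: (w0 a *: a) - (eps / N) *: a)) => [|a _].
      2: by rewrite scalerBl scalerA.
    rewrite sumrB -!scaler_sumr -pE /q /b; apply/rowP => j.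
    by rewrite !mxE; field; rewrite gt_eqF.
  have -> : q 0 j - p 0 j = eps * (p 0 j - b 0 j) by rewrite !mxE addrAC subrr add0r.
  have le_M : `|p 0 j - b 0 j| <= M by rewrite /M (bigD1 j) //= lerDl sumr_ge0.
  rewrite normrM gtr0_norm // (le_lt_trans (ler_wpM2l (ltW eps_gt0) le_M)) //.
  by rewrite /eps mulrAC ltr_pdivrMr ?ltr_pwDr // ltr_pM2l // ltrDl.
have eps1_gt0 : 0 < 1 + eps by rewrite addr_gt0.
have epsN_gt0 : 0 < eps / N by rewrite divr_gt0.
exists (fun a => (u a + eps / N) / (1 + eps)); last first.
  by move=> a aS; rewrite divr_gt0 // ltr_wpDl ?u_ge0.
split=> [a aS||].
- by rewrite divr_ge0 ?addr_ge0 ?u_ge0 ?ltW.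
- by rewrite -mulr_suml big_split /= u1 sumr_const_seq; field; rewrite !gt_eqF.
- pose t := (1 + eps)^-1 * (eps / N).
  rewrite (eq_bigr (fun a => (1 + eps)^-1 *: (u a *: a) + t *: a)) => [|a _].
    rewrite big_split /= -!scaler_sumr -qE /q /b /t; apply/rowP => j.
    by rewrite !mxE; field; rewrite !gt_eqF.
  by rewrite /t mulrDl scalerDl !scalerA mulrC [_^-1 * (_ / _)]mulrC.
Qed.

Definition balanced S p w :=
  (forall a, 0 <= w a) /\ \sum_(a <- S) w a *: (a - p) = 0.

Lemma balanced0 S p : balanced S p (fun=> 0).
Proof. by split=> //; rewrite big1 // => a _; rewrite scale0r. Qed.

Lemma balancedD S p w1 w2 : balanced S p w1 -> balanced S p w2 ->
  balanced S p (fun a => w1 a + w2 a).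
Proof.
move=> [w1_ge0 w1E] [w2_ge0 w2E]; split=> [a|]; first by rewrite addr_ge0.
rewrite (eq_bigr (fun a => w1 a *: (a - p) + w2 a *: (a - p))) => [|a _]; last first.
  by rewrite scalerDl.
by rewrite big_split /= w1E w2E addr0.
Qed.

Lemma balanced_conv_weights S p w : balanced S p w ->
  (forall a, a \in S -> 0 < w a) -> S != [::] ->
  exists2 w', conv_weights S p w' & forall a, a \in S -> 0 < w' a.
Proof.
move=> [w_ge0 wE] w_gt0 S_neq0; pose W := \sum_(a <- S) w a.
have W_gt0 : 0 < W.
  have [a aS] : exists a, a \in S.
    by case: S S_neq0 {w_gt0 wE W} => // a S; exists a; exact: mem_head.
  rewrite /W (big_rem a aS) /=; have := w_gt0 a aS.
  have : 0 <= \sum_(b <- rem a S) w b by apply: sumr_ge0.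
  lra.
exists (fun a => w a / W); last by move=> a aS; rewrite divr_gt0 // w_gt0.
have sum_wa : \sum_(a <- S) w a *: a = W *: p.
  apply/eqP; rewrite -subr_eq0 scaler_suml -sumrB -[X in _ == X]wE; apply/eqP.
  by apply: eq_bigr => a _; rewrite scalerBr.
split=> [a _||].
- by rewrite divr_ge0 ?w_ge0 ?ltW.
- by rewrite -mulr_suml divff ?gt_eqF.
- rewrite (eq_bigr (fun a => W^-1 *: (w a *: a))) => [|a _]; last first.
    by rewrite scalerA mulrC.
  by rewrite -scaler_sumr sum_wa scalerA mulVf ?gt_eqF ?scale1r.
Qed.

End RelativeInterior.

Section AffineMatrix.
Variables (R : realType) (n : nat) (S : seq 'rV[R]_n).
Local Notation m := (size S).

Definition affine_mx : 'M[R]_(m, n + 1) := row_mx (\matrix_i nth 0 S i) (const_mx 1).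

Definition weights_row (w : 'rV[R]_n -> R) : 'rV[R]_m := \row_i w (nth 0 S i).

Definition row_weights (D : 'rV[R]_m) (a : 'rV[R]_n) : R :=
  \sum_(i < m | nth 0 S i == a) D 0 i.

Lemma weights_row_mul w : weights_row w *m affine_mx =
  row_mx (\sum_(a <- S) w a *: a) (const_mx (\sum_(a <- S) w a)).
Proof.
rewrite mul_mx_row mulmx_sum_row; congr row_mx.
  by rewrite [RHS](big_nth 0) big_mkord; apply: eq_bigr => i _; rewrite rowK mxE.
apply/rowP => j; rewrite !mxE [RHS](big_nth 0) big_mkord.
by apply: eq_bigr => i _; rewrite !mxE mulr1.
Qed.

Hypothesis S_uniq : uniq S.

Lemma row_weights_nth D (i : 'I_m) : row_weights D (nth 0 S i) = D 0 i.
Proof. by rewrite /row_weights (big_pred1 i) // => k; rewrite nth_uniq. Qed.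

Lemma row_weightsK D : weights_row (row_weights D) = D.
Proof. by apply/rowP => i; rewrite mxE row_weights_nth. Qed.

(* Small moves of [p] inside aff S are matched by small changes of the weights,
   through a fixed solution operator of the linear system given by [affine_mx]. *)
Lemma pos_weights_relint p w : conv_weights S p w ->
  (forall a, a \in S -> 0 < w a) -> in_relint_conv S p.
Proof.
move=> [w_ge0 w1 pE] w_gt0; split; first by exists w.
have [e0 e0_gt0 le_e0] := seq_min_gt0 w_gt0.
pose P := pinvmx affine_mx.
pose K := \sum_(j < n + 1) \sum_(l < m) `|P j l|.
have K_ge0 : 0 <= K by apply: sumr_ge0 => j _; apply: sumr_ge0.
pose eps := e0 / (K + 1).
have eps_gt0 : 0 < eps by rewrite divr_gt0 ?ltr_pwDr.
exists eps; split => // q [u [u1 qE]] near_q.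
pose r : 'rV[R]_(n + 1) := row_mx (q - p) 0.
have r_le j : `|r 0 j| <= eps.
  by rewrite mxE; case: splitP => k _; rewrite !mxE ?normr0 ?ltW ?near_q.
have rM : (r <= affine_mx)%MS.
  suff -> : r = (weights_row u - weights_row w) *m affine_mx by exact: submxMl.
  by rewrite mulmxBl !weights_row_mul opp_row_mx add_row_mx -qE -pE u1 w1 subrr.
pose D := r *m P; pose g := row_weights D.
have g_small a : a \in S -> `|g a| <= eps * K.
  move=> aS; have ia : (index a S < m)%N by rewrite index_mem.
  rewrite -(nth_index 0 aS) -[index a S]/(nat_of_ord (Ordinal ia)).
  by rewrite /g row_weights_nth (mulmx_row_norm_le P (ltW eps_gt0) r_le).
have : D *m affine_mx = r := mulmxKpV rM.
rewrite -(row_weightsK D) weights_row_mul => /eq_row_mx[gE g0].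
exists (fun a => w a + g a); split.
- move=> a aS; have := ler_norm (- g a); rewrite normrN => le_g.
  have : eps * K < e0 by rewrite /eps mulrAC ltr_pdivrMr ?ltr_pwDr // ltr_pM2l // ltrDl.
  have := le_e0 a aS; have := g_small a aS; lra.
- have /rowP/(_ 0) := g0; rewrite !mxE => g0'.
  by rewrite big_split /= w1 g0' addr0.
- rewrite (eq_bigr (fun a => w a *: a + g a *: a)) => [|a _]; last by rewrite scalerDl.
  by rewrite big_split /= -pE gE addrC subrK.
Qed.

End AffineMatrix.

Section Center.
Variables (R : realType) (n : nat).
Implicit Types (x y v : 'rV[R]_n).

Definition center x : 'rV[R]_n := x - const_mx ((\sum_(j < n) x 0 j) / n%:R).

Lemma inH_center x : inH (center x).
Proof.
rewrite /inH /center (eq_bigr (fun j => x 0 j - (\sum_(i < n) x 0 i) / n%:R)) => [|j _].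
  2: by rewrite !mxE.
rewrite sumrB sumr_const card_ord -[X in _ - X]mulr_natr; have [n0|n_gt0] := posnP n.
  by move: x; rewrite n0 => x; rewrite big_ord0 !mul0r subrr.
by rewrite divfK ?subrr // pnatr_eq0 -lt0n.
Qed.

Lemma inH_add y v (e : R) : inH y -> inH v -> inH (y + e *: v).
Proof.
rewrite /inH => yH vH.
rewrite (eq_bigr (fun j => y 0 j + e * v 0 j)) => [|j _]; last by rewrite !mxE.
by rewrite big_split /= yH -mulr_sumr vH mulr0 addr0.
Qed.

End Center.

Section TropicalSignomial.
Variables (R : realType) (n : nat) (A : seq 'rV[R]_n) (c : 'rV[R]_n -> option R).
Implicit Types (a x y z v : 'rV[R]_n) (S : seq 'rV[R]_n) (w : 'rV[R]_n -> R).
Local Notation supp := (supp A c).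
Local Notation term := (term c).
Local Notation f := (tsig A c).
Local Notation B := (Bset A c).

Definition argminH y := inH y /\ forall z, inH z -> f y <= f z.

Lemma termD a x y : term a (x + y) = term a x + dotv a y.
Proof. by rewrite /term dotvDr addrA. Qed.

Lemma tsig_ge a x : a \in supp -> term a x <= f x.
Proof. by move=> ha; exact: (le_bigmax_seq _ _ _ _ ha). Qed.

Lemma mem_Bset a x : (a \in B x) = (a \in supp) && (term a x == f x).
Proof. by rewrite mem_filter andbC. Qed.

Lemma Bset_supp x : {subset B x <= supp}.
Proof. by move=> a; rewrite mem_Bset => /andP[]. Qed.

Lemma uniq_Bset x : uniq A -> uniq (B x).
Proof. by move=> uA; rewrite !filter_uniq. Qed.

Lemma tsig_gt a x : a \in supp -> a \notin B x -> term a x < f x.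
Proof. by move=> ha; rewrite mem_Bset ha lt_neqAle tsig_ge // andbT. Qed.

Hypothesis supp_neq0 : supp != [::].

Lemma tsig_le x m : (forall a, a \in supp -> term a x <= m) -> f x <= m.
Proof.
move=> le_m; rewrite /tsig big_seq; apply: bigmax_le => [|a /le_m //].
by apply: le_m; case: supp supp_neq0 => // a s _; exact: mem_head.
Qed.

Lemma Bset_neq0 x : B x != [::].
Proof.
have : f x \in [seq term a x | a <- supp].
  rewrite /tsig big_seq; elim/big_ind: _ => [|u v|a /(map_f (term^~ x)) //].
    by apply: map_f; case: supp supp_neq0 => // a s _; exact: mem_head.
  by rewrite maxEle; case: ifP.
case/mapP=> a ha fx; apply/eqP => Bx0.
by have := mem_Bset a x; rewrite Bx0 ha fx eqxx.
Qed.

Lemma tsig_translate x y k : (forall a, a \in supp -> term a y = term a x + k) ->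
  f y = f x + k /\ B y = B x.
Proof.
move=> tyx; have fyx : f y = f x + k.
  apply/le_anti; rewrite tsig_le => [|a ha]; last by rewrite tyx ?lerD2r ?tsig_ge.
  by rewrite -lerBrDr tsig_le // => a ha; rewrite lerBrDr -tyx ?tsig_ge.
split => //; apply: eq_in_filter => a ha.
by rewrite tyx // fyx (inj_eq (addIr k)).
Qed.

Lemma tsig_perturb y v : exists2 e, 0 < e &
  forall a, a \in supp -> a \notin B y -> term a (y + e *: v) < f y.
Proof.
pose gap a := (f y - term a y) / (`|dotv a v| + 1).
have gap_gt0 a : a \in [seq b <- supp | b \notin B y] -> 0 < gap a.
  by rewrite mem_filter => /andP[aB ha]; rewrite divr_gt0 ?subr_gt0 ?tsig_gt ?ltr_pwDr.
have [e e0 le_e] := seq_min_gt0 gap_gt0.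
exists e => // a ha aB; have := le_e a; rewrite mem_filter aB ha => /(_ isT).
rewrite termD dotvZr ler_pdivlMr ?ltr_pwDr // => le_gap.
have := ler_norm (dotv a v); nra.
Qed.

Lemma wavg_term S w lam z : const_mx lam = \sum_(a <- S) w a *: a ->
  \sum_(a <- S) w a * term a z =
    \sum_(a <- S) w a * coef c a + lam * \sum_(j < n) z 0 j.
Proof.
move=> lamE; rewrite -dotv_const dotvC lamE dotv_suml -big_split /=.
by apply: eq_bigr => a _; rewrite dotvZl -mulrDr.
Qed.

Lemma wavg_term_le S w z :
  (forall a, a \in S -> 0 <= w a) -> \sum_(a <- S) w a = 1 -> {subset S <= supp} ->
  \sum_(a <- S) w a * term a z <= f z.
Proof.
move=> w_ge0 w1 Ssupp; rewrite -[f z]mul1r -w1 mulr_suml big_seq [leRHS]big_seq.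
by apply: ler_sum => a aS; rewrite ler_wpM2l ?w_ge0 ?tsig_ge ?Ssupp.
Qed.

Lemma wavg_term_Bset S w y : \sum_(a <- S) w a = 1 -> {subset S <= B y} ->
  \sum_(a <- S) w a * term a y = f y.
Proof.
move=> w1 SB; rewrite -[f y]mul1r -w1 mulr_suml; apply: eq_big_seq => a aS.
by have := SB a aS; rewrite mem_Bset => /andP[_ /eqP ->].
Qed.

Lemma cell_sub_argminH S w lam y :
  (forall a, a \in S -> 0 <= w a) -> \sum_(a <- S) w a = 1 ->
  const_mx lam = \sum_(a <- S) w a *: a -> inH y -> {subset S <= B y} -> argminH y.
Proof.
move=> w_ge0 w1 lamE yH SB; split => // z zH.
have Ssupp : {subset S <= supp} by move=> a /SB/Bset_supp.
rewrite -(wavg_term_Bset w1 SB) (le_trans _ (wavg_term_le z w_ge0 w1 Ssupp)) //.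
by rewrite !(wavg_term _ lamE) yH zH.
Qed.

Lemma argminH_cell_sub S w lam x y :
  (forall a, a \in S -> 0 < w a) -> \sum_(a <- S) w a = 1 ->
  const_mx lam = \sum_(a <- S) w a *: a -> inH x -> {subset S <= B x} ->
  argminH y -> {subset S <= B y}.
Proof.
move=> w_gt0 w1 lamE xH SB [yH y_min] a aS.
have Ssupp : {subset S <= supp} by move=> b /SB/Bset_supp.
have fx : f x = \sum_(b <- S) w b * coef c b.
  by rewrite -(wavg_term_Bset w1 SB) (wavg_term _ lamE) xH mulr0 addr0.
have avg_y : f y <= \sum_(b <- S) w b * term b y.
  by rewrite (wavg_term _ lamE) yH mulr0 addr0 -fx y_min.
rewrite mem_Bset Ssupp //=; apply/eqP.
by apply: (wavg_ge_max w_gt0 w1 _ avg_y) => // b /Ssupp; exact: tsig_ge.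
Qed.

Lemma argminH_slide y u a0 : argminH y -> inH u ->
  (forall a, a \in B y -> dotv a u <= 0) -> dotv a0 u < 0 ->
  exists2 y', argminH y' & {subset B y' <= [predD1 B y & a0]}.
Proof.
move=> [yH y_min] uH uB a0u; have [e e_gt0 e_out] := tsig_perturb y u.
pose y' := y + e *: u.
have y'H : inH y' := inH_add e yH uH.
have term_y' a : term a y' = term a y + e * dotv a u by rewrite termD dotvZr.
have fy' : f y' = f y.
  apply/le_anti; rewrite y_min // andbT; apply: tsig_le => a ha.
  case: (boolP (a \in B y)) => aB; last exact/ltW/e_out.
  move: (aB); rewrite mem_Bset => /andP[_ /eqP <-].
  by rewrite term_y' gerDl pmulr_rle0 ?uB.
exists y'; first by split=> // z zH; rewrite fy' y_min.
move=> a; rewrite mem_Bset fy' inE => /andP[ha /eqP ty'].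
case: (boolP (a \in B y)) => aB; last by have := e_out a ha aB; rewrite ty' ltxx.
rewrite andbT; apply/eqP => aa0; move: ty'; rewrite aa0 term_y'.
move: aB; rewrite aa0 mem_Bset => /andP[_ /eqP ->].
have : e * dotv a0 u < 0 by rewrite pmulr_rlt0.
lra.
Qed.

End TropicalSignomial.

Section Homogeneous.
Variables (R : realType) (n : nat) (A : seq 'rV[R]_n) (c : 'rV[R]_n -> option R) (d : R).
Hypotheses (A_uniq : uniq A) (supp_neq0 : supp A c != [::])
  (supp_deg : forall a, a \in supp A c -> \sum_(j < n) a 0 j = d).
Implicit Types (a x y z v : 'rV[R]_n).
Local Notation supp := (supp A c).
Local Notation term := (term c).
Local Notation f := (tsig A c).
Local Notation B := (Bset A c).
Local Notation argminH := (argminH A c).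

(* the point of the line [R 1] on the hyperplane [sum_j a_j = d] containing supp *)
Definition diag_point : 'rV[R]_n := const_mx (d / n%:R).

Lemma dotv_const_supp a t : a \in supp -> dotv a (const_mx t) = t * d.
Proof. by move=> ha; rewrite dotv_const supp_deg. Qed.

Lemma Bset_center x : B (center x) = B x.
Proof.
pose t := (\sum_(j < n) x 0 j) / n%:R.
have cxE : center x = x + const_mx (- t) by apply/rowP => j; rewrite !mxE.
have tE a : a \in supp -> term a (center x) = term a x + - t * d.
  by move=> ha; rewrite cxE termD dotv_const_supp.
by have [] := tsig_translate supp_neq0 tE.
Qed.

Lemma dotv_center a v : a \in supp -> dotv a (center v) = dotv (a - diag_point) v.
Proof.
move=> ha; have -> : center v = v + const_mx (- ((\sum_(j < n) v 0 j) / n%:R)).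
  by apply/rowP => j; rewrite !mxE.
by rewrite dotvDr dotv_const_supp // dotvBl [dotv diag_point v]dotvC dotv_const; ring.
Qed.

Lemma argminH_descent y a0 : argminH y -> a0 \in B y ->
  (exists2 w, balanced (B y) diag_point w & 0 < w a0) \/
  (exists2 y', argminH y' & (size (B y') < size (B y))%N).
Proof.
move=> ym a0B; have uB := uniq_Bset c y A_uniq.
have [[mu mu_ge0 muE]|[v vB a0v]] :=
  farkas (fun a => a - diag_point) (diag_point - a0) uB.
  left; exists (fun a => mu a + (a == a0)%:R); last by rewrite eqxx ltr_wpDl.
  split=> [a|]; first by rewrite addr_ge0 ?ler0n.
  pose h a := a - diag_point.
  rewrite (eq_bigr (fun a => mu a *: h a + (a == a0)%:R *: h a)) => [|a _]; last first.
    by rewrite scalerDl.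
  rewrite big_split /= -muE (bigD1_seq a0) //= eqxx scale1r big1 => [|a /negbTE ->].
    by rewrite addr0 /h addrA subrK subrr.
  by rewrite scale0r.
right; have a0v' : dotv a0 (center v) < 0.
  by rewrite dotv_center ?(Bset_supp a0B) // dotvBl; move: a0v; rewrite !dotvBl; lra.
have vB' a : a \in B y -> dotv a (center v) <= 0.
  by move=> aB; rewrite dotv_center ?(Bset_supp aB) ?vB.
have [y' y'm B_y'] := argminH_slide supp_neq0 ym (inH_center v) vB' a0v'.
exists y' => //; have B_y'_rem : {subset B y' <= rem a0 (B y)}.
  by move=> a /B_y'; rewrite (mem_rem_uniq _ uB).
rewrite (leq_ltn_trans (uniq_leq_size (uniq_Bset c y' A_uniq) B_y'_rem)) // size_rem //.
by rewrite ltn_predL; case: (B y) a0B.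
Qed.

Lemma argminH_balanced_or_descent y (s : seq 'rV[R]_n) : argminH y -> {subset s <= B y} ->
  (exists2 w, balanced (B y) diag_point w & forall a, a \in s -> 0 < w a) \/
  (exists2 y', argminH y' & (size (B y') < size (B y))%N).
Proof.
move=> ym; elim: s => [|a0 s IH] sB.
  by left; exists (fun=> 0) => //; exact: balanced0.
have [|[w1 w1_bal w1_gt0]|] := IH; last by right.
  by move=> a sa; apply: sB; rewrite inE sa orbT.
have [[w2 w2_bal w2_gt0]|] := argminH_descent ym (sB a0 (mem_head _ _)); last by right.
left; exists (fun a => w1 a + w2 a); first exact: balancedD.
move=> a; rewrite inE => /predU1P[->|sa]; first by rewrite ltr_wpDl ?w1_bal.1.
by rewrite ltr_wpDr ?w2_bal.1 ?w1_gt0.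
Qed.

Lemma argminH_relint y : argminH y -> exists x, in_relint_conv (B x) diag_point.
Proof.
have [k] := ubnP (size (B y)); elim: k y => // k IH y /ltnSE le_k ym.
have [[w w_bal w_gt0]|[y' y'm lt_y']] :=
  argminH_balanced_or_descent (s := B y) ym (fun _ => id).
  have [w' w'_conv w'_gt0] := balanced_conv_weights w_bal w_gt0 (Bset_neq0 supp_neq0 y).
  by exists y; exact: (pos_weights_relint (uniq_Bset c y A_uniq) w'_conv w'_gt0).
exact: IH y' (leq_trans lt_y' le_k) y'm.
Qed.

End Homogeneous.

Theorem lemma2p7 (R : realType) (n : nat) (A : seq 'rV[R]_n)
    (c : 'rV[R]_n -> option R)
    (hA : uniq A)
    (hpos : forall a, a \in A -> forall j, 0 <= a ord0 j)
    (hsupp : supp A c != [::])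
    (hhom : homogeneous A c) :
  let f := tsig A c in
  let B := Bset A c in
  let central (x : 'rV[R]_n) :=
    exists lam : R, in_relint_conv (B x) (const_mx lam) in
  ((exists y, inH y /\ forall z, inH z -> f y <= f z) <->
   (exists x, central x)) /\
  (forall x, central x ->
     forall y, (inH y /\ forall z, inH z -> f y <= f z) <->
               (inH y /\ {subset B x <= B y})).
Proof.
move=> f B central; have [d supp_deg] := hhom.
have cellP x : central x -> forall y, argminH A c y <-> inH y /\ {subset B x <= B y}.
  move=> [lam /relint_pos_weights[w [w_ge0 w1 lamE] w_gt0]] y.
  have xB : {subset B x <= B (center x)} by rewrite /B (Bset_center hsupp supp_deg).
  split=> [ym|[yH xyB]]; last exact: cell_sub_argminH w_ge0 w1 lamE yH xyB.
  by split; [case: ym | exact: argminH_cell_sub w_gt0 w1 lamE (inH_center x) xB ym].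
split=> //; split=> [[y /(argminH_relint hA hsupp supp_deg)[x xc]]|[x xc]].
  by exists x, (d / n%:R).
exists (center x); apply/(cellP x xc).
by split; [exact: inH_center | rewrite /B (Bset_center hsupp supp_deg)].
Qed.
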